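(* Let $p/q$ be an even rational parameter and $P=2p/(p+q)$. For every tile center $c$, the label assigned to $-c$ by the tile description is obtained from the label assigned to $c$ by swapping N with S and E with W. Equivalently, the tiling produced by $(\Xi_P,X_P)$ is invariant under reflection in the origin.
   Context: An even rational parameter is a rational $p/q\in(0,1)$, $p,q$ positive coprime integers, $pq$ even; $\omega=p+q$, $P=2p/\omega$. Tile centers are the points $(m+\frac12,n+\frac12)$, $m,n\in\mathbb Z$; each is the center of a unit square with edges N, S, E, W. Let $\Lambda_P\subset\mathbb R^3$ be the lattice generated by $(2,P,P),(0,2,0),(0,0,2)$, $X_P=\mathbb R^3/\Lambda_P$ with coordinates $(T,U_1,U_2)$ and fundamental domain $[-1,1]^3$, and $\Xi_P(x,y)=(2Px+2y,2Px,2Px+2Py)\bmod\Lambda_P$. Each fiber $\{T\}\times[-1,1]^2$ is partitioned: given $u_1\le u_2\le u_3$, the lines $U_1=u_i$, $U_2=u_i$ cut $[-1,1]^2$ into a $4\times4$ grid of rectangles indexed by (column $a$, row $b$), columns in increasing $U_1$, rows in increasing $U_2$. Special rectangles with single letters: for $T\in[-1,-1+P]$: $(u_1,u_2,u_3)=(T,1-P,2-P+T)$, W $(4,4)$, N $(1,3)$, E $(2,2)$, S $(3,1)$; for $T\in[-1+P,1-P]$: $(-1+P,T,1-P)$, N $(1,4)$, E $(3,3)$, W $(2,2)$, S $(4,1)$; for $T\in[1-P,1]$: $(-2+P+T,-1+P,T)$, N $(2,4)$, W $(3,3)$, S $(4,2)$, E $(1,1)$. A non-special rectangle gets the unordered pair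 of letters of the special rectangles in its column and in its row; special rectangles get the empty label. The label of a tile center $c$ is the label of the rectangle (in its fiber) whose interior contains the representative of $\Xi_P(c)$ in $[-1,1]^3$ (this is known to be well defined for even rational parameters); a label $\{X,Y\}$ is drawn as a segment joining the midpoints of edges $X$ and $Y$ of the unit square centered at $c$. *)

From Stdlib Require Import Reals ZArith Arith.
Open Scope R_scope.

Definition even_rational_param (p q : nat) : Prop :=
  (0 < p)%nat /\ (p < q)%nat /\ Nat.gcd p q = 1%nat /\ Nat.even (p * q) = true.

Definition Pparam (p q : nat) : R := 2 * INR p / INR (p + q).

Inductive letter : Type := LN | LS | LE | LW.

Definition swap_letter (x : letter) : letter :=
  match x with LN => LS | LS => LN | LE => LW | LW => LE end.

(** Xi_P(x,y) = (2Px+2y, 2Px, 2Px+2Py) (before reduction mod Lambda_P). *)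
Definition Xi (P x y : R) : R * R * R :=
  (2 * P * x + 2 * y, 2 * P * x, 2 * P * x + 2 * P * y).

(** (T,U1,U2) in [-1,1]^3 is a representative of v mod the lattice Lambda_P
    generated by (2,P,P),(0,2,0),(0,0,2). *)
Definition representative (P : R) (v : R * R * R) (T U1 U2 : R) : Prop :=
  let '(v0, v1, v2) := v in
  -1 <= T <= 1 /\ -1 <= U1 <= 1 /\ -1 <= U2 <= 1 /\
  exists k a b : Z,
    T = v0 + 2 * IZR k /\
    U1 = v1 + IZR k * P + 2 * IZR a /\
    U2 = v2 + IZR k * P + 2 * IZR b.

Definition in_interval (u1 u2 u3 : R) (i : nat) (v : R) : Prop :=
  match i with
  | 1%nat => -1 < v < u1
  | 2%nat => u1 < v < u2
  | 3%nat => u2 < v < u3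
  | 4%nat => u3 < v < 1
  | _ => False
  end.

(** Special rectangles (column, row) of each letter in the three regimes. *)
Definition special1 (x : letter) : nat * nat :=
  match x with LW => (4,4) | LN => (1,3) | LE => (2,2) | LS => (3,1) end%nat.
Definition special2 (x : letter) : nat * nat :=
  match x with LN => (1,4) | LE => (3,3) | LW => (2,2) | LS => (4,1) end%nat.
Definition special3 (x : letter) : nat * nat :=
  match x with LN => (2,4) | LW => (3,3) | LS => (4,2) | LE => (1,1) end%nat.

(** Partition data of the fiber over T: cut points and special rectangles. *)
Definition fiber_data (P T u1 u2 u3 : R) (sp : letter -> nat * nat) : Prop :=
  (-1 <= T <= -1 + P /\ u1 = T /\ u2 = 1 - P /\ u3 = 2 - P + T /\ sp = special1)
  \/ (-1 + P <= T <= 1 - P /\ u1 = -1 + P /\ u2 = T /\ u3 = 1 - P /\ sp = special2)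
  \/ (1 - P <= T <= 1 /\ u1 = -2 + P + T /\ u2 = -1 + P /\ u3 = T /\ sp = special3).

Definition in_rect_label (sp : letter -> nat * nat) (a b : nat) (x : letter) : Prop :=
  ~ (exists y, sp y = (a, b)) /\ (fst (sp x) = a \/ snd (sp x) = b).

Definition label_at (P x y : R) (L : letter -> Prop) : Prop :=
  exists T U1 U2, representative P (Xi P x y) T U1 U2 /\
  exists u1 u2 u3 sp, fiber_data P T u1 u2 u3 sp /\
  exists a b : nat, in_interval u1 u2 u3 a U1 /\ in_interval u1 u2 u3 b U2 /\
  forall z, L z <-> in_rect_label sp a b z.

Definition tile_center (m n : Z) : R * R := (IZR m + / 2, IZR n + / 2).

(* Point reflection x |-> -x commutes with everything in sight: Xi_P is linear and the
   lattice Lambda_P is symmetric, so the representative of Xi_P(-c) is minus that of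
   Xi_P(c); the fiber over -T is the mirror image of the fiber over T, with the cut
   points negated and reversed, interval i becoming interval 5 - i, and the first and
   third regimes exchanged; under this mirror the special rectangles of N, S, E, W
   land on those of S, N, W, E. *)
From Stdlib Require Import Reals ZArith Arith Lra Lia FunctionalExtensionality.
Open Scope R_scope.

Lemma swap_letter_involutive (z : letter) : swap_letter (swap_letter z) = z.
Proof. destruct z; reflexivity. Qed.

Lemma representative_opp (P x y T U1 U2 : R) :
  representative P (Xi P x y) T U1 U2 ->
  representative P (Xi P (- x) (- y)) (- T) (- U1) (- U2).
Proof.
  unfold representative, Xi.
  intros (HT & HU1 & HU2 & k & a & b & eT & eU1 & eU2).
  repeat split; try lra.
  exists (- k)%Z, (- a)%Z, (- b)%Z.
  rewrite !opp_IZR; subst; repeat split; ring.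
Qed.

Lemma in_interval_opp (u1 u2 u3 : R) (i : nat) (v : R) :
  in_interval u1 u2 u3 i v ->
  in_interval (- u3) (- u2) (- u1) (5 - i) (- v) /\ (1 <= i <= 4)%nat.
Proof.
  destruct i as [|[|[|[|[|i]]]]]; simpl; intros H; try contradiction;
    split; try lia; lra.
Qed.

Definition mirror_special (sp : letter -> nat * nat) (x : letter) : nat * nat :=
  let '(a, b) := sp (swap_letter x) in (5 - a, 5 - b)%nat.

Lemma mirror_special1 : mirror_special special1 = special3.
Proof. apply functional_extensionality; intros []; reflexivity. Qed.

Lemma mirror_special2 : mirror_special special2 = special2.
Proof. apply functional_extensionality; intros []; reflexivity. Qed.

Lemma mirror_special3 : mirror_special special3 = special1.
Proof. apply functional_extensionality; intros []; reflexivity. Qed.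

Lemma fiber_data_opp (P T u1 u2 u3 : R) (sp : letter -> nat * nat) :
  fiber_data P T u1 u2 u3 sp ->
  fiber_data P (- T) (- u3) (- u2) (- u1) (mirror_special sp).
Proof.
  unfold fiber_data.
  intros [(HT & e1 & e2 & e3 & esp) | [(HT & e1 & e2 & e3 & esp) | (HT & e1 & e2 & e3 & esp)]];
    subst.
  - right; right; rewrite mirror_special1; repeat split; lra.
  - right; left; rewrite mirror_special2; repeat split; lra.
  - left; rewrite mirror_special3; repeat split; lra.
Qed.

Lemma in_rect_label_mirror (sp : letter -> nat * nat) (a b : nat) (z : letter) :
  (1 <= a <= 4)%nat -> (1 <= b <= 4)%nat ->
  in_rect_label sp a b (swap_letter z) <->
  in_rect_label (mirror_special sp) (5 - a) (5 - b) z.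
Proof.
  intros Ha Hb; unfold in_rect_label, mirror_special.
  split; intros [Hnot Hlet]; split.
  - intros [y Hy]; apply Hnot; exists (swap_letter y).
    destruct (sp (swap_letter y)) as [c r].
    pose proof (f_equal fst Hy); pose proof (f_equal snd Hy); cbn [fst snd] in *.
    f_equal; lia.
  - destruct (sp (swap_letter z)) as [c r]; cbn [fst snd] in *; lia.
  - intros [y Hy]; apply Hnot; exists (swap_letter y).
    rewrite swap_letter_involutive, Hy; reflexivity.
  - destruct (sp (swap_letter z)) as [c r]; cbn [fst snd] in *; lia.
Qed.

Lemma label_at_opp (P x y : R) (L L' : letter -> Prop) :
  (forall z, L' z <-> L (swap_letter z)) ->
  label_at P x y L -> label_at P (- x) (- y) L'.
Proof.
  intros HL' (T & U1 & U2 & Hrep & u1 & u2 & u3 & sp & Hfib & a & b & Ha & Hb & HL).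
  exists (- T), (- U1), (- U2); split; [now apply representative_opp|].
  exists (- u3), (- u2), (- u1), (mirror_special sp); split; [now apply fiber_data_opp|].
  apply in_interval_opp in Ha as [Ha Ha4]; apply in_interval_opp in Hb as [Hb Hb4].
  exists (5 - a)%nat, (5 - b)%nat; split; [exact Ha|]; split; [exact Hb|].
  intros z; rewrite HL', HL; now apply in_rect_label_mirror.
Qed.

Theorem lemma3p4 (p q : nat) (hpq : even_rational_param p q) (m n : Z)
    (L : letter -> Prop) :
  label_at (Pparam p q) (fst (tile_center m n)) (snd (tile_center m n)) L <->
  label_at (Pparam p q) (- fst (tile_center m n)) (- snd (tile_center m n))
    (fun z => L (swap_letter z)).
Proof.
  split.
  - apply label_at_opp; intros z; reflexivity.
  - intros H; apply label_at_opp with (L' := L) in H.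
    + rewrite !Ropp_involutive in H; exact H.
    + intros z; rewrite swap_letter_involutive; reflexivity.
Qed.
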